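(* Let $\mu$ be a continuous capacity on a measurable space $(\Omega,\mathcal{F})$ and let $\mathcal{F}_0$ be a sub-$\sigma$-algebra of $\mathcal{F}$ with $\mu(A)\in\{0,1\}$ for all $A\in\mathcal{F}_0$. Then: (i) for every $\mathcal{F}_0$-measurable real-valued random variable $\xi$, $$\mu\Big(\Big\{\omega:\ \xi(\omega)\ge \int_{\Omega}\xi\, d\mu\Big\}\Big)=1\quad\text{and}\quad \mu\Big(\Big\{\omega:\ \xi(\omega)\le\int_{\Omega}\xi\, d\bar{\mu}\Big\}\Big)=1;$$ (ii) if moreover $\mu(A\cap B)=1$ for all $A,B\in\mathcal{F}_0$ with $\mu(A)=\mu(B)=1$, then for every $\mathcal{F}_0$-measurable real-valued random variable $\xi$, $$\mu\Big(\Big\{\omega:\ \int_{\Omega}\xi\, d\mu \le\xi(\omega)\le\int_{\Omega}\xi\, d\bar{\mu}\Big\}\Big)=1.$$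
   Context: A capacity on $\mathcal{F}$ is a set function $\mu:\mathcal{F}\to[0,1]$ with $\mu(\emptyset)=0$, $\mu(\Omega)=1$ and $\mu(A)\le\mu(B)$ whenever $A\subseteq B$; it is continuous if $\mu(A_n)\to\mu(A)$ both whenever $A_n\uparrow A$ and whenever $A_n\downarrow A$. The conjugate capacity is $\bar{\mu}(A)=1-\mu(A^c)$. The Choquet integral of a real-valued $\mathcal{F}$-measurable $\xi$ with respect to a capacity $\mu$ is $\int_{\Omega}\xi\, d\mu=\int_{0}^{\infty}\mu(\{\xi\ge t\})\,dt+\int_{-\infty}^0[\mu(\{\xi\ge t\})-1]\,dt$. *)

From HB Require Import structures.
From mathcomp Require Import all_boot all_order all_algebra.
From mathcomp Require Import all_classical all_reals all_analysis.
Set Implicit Arguments. Unset Strict Implicit. Unset Printing Implicit Defensive.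
Import Order.TTheory GRing.Theory Num.Theory.
Import numFieldNormedType.Exports.
Local Open Scope classical_set_scope.
Local Open Scope ring_scope.

Section Capacity.
Context {d : measure_display} {T : measurableType d} {R : realType}.

(** A capacity on the sigma-algebra [measurable] of T (values on
    non-measurable sets are irrelevant). *)
Definition capacity (mu : set T -> R) : Prop :=
  [/\ mu set0 = 0, mu setT = 1,
      (forall A, measurable A -> 0 <= mu A <= 1) &
      (forall A B, measurable A -> measurable B -> A `<=` B -> mu A <= mu B)].

Definition continuous_capacity (mu : set T -> R) : Prop :=
  capacity mu /\
  (forall (A : (set T)^nat), (forall n, measurable (A n)) ->
     nondecreasing_seq A -> (fun n => mu (A n)) @ \oo --> mu (\bigcup_n A n)) /\
  (forall (A : (set T)^nat), (forall n, measurable (A n)) ->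
     nonincreasing_seq A -> (fun n => mu (A n)) @ \oo --> mu (\bigcap_n A n)).

Definition conj_cap (mu : set T -> R) : set T -> R := fun A => 1 - mu (~` A).

Definition choquet (mu : set T -> R) (xi : T -> R) : \bar R :=
  ((\int[lebesgue_measure]_(t in `[0%R, +oo[) (mu [set w | t <= xi w])%:E)
   + (\int[lebesgue_measure]_(t in `]-oo, 0%R[) (mu [set w | t <= xi w] - 1)%:E))%E.

End Capacity.

(* For an F0-measurable xi every level set {xi >= t} lies in F0, so
   t |-> mu (xi >= t) is a nonincreasing {0,1}-valued function.  Continuity of
   mu makes it tend to 1 at -oo and to 0 at +oo and makes it left-continuous,
   so it is the indicator of ]-oo, c] with c the supremum of the t where it
   equals 1.  The Choquet integral of xi is then c, and mu (xi >= c) = 1.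
   The conjugate capacity is again continuous and {0,1}-valued on the level
   sets of xi, so the same argument gives a threshold c' for it; since it
   vanishes on the sets {xi >= c' + 1/(n+1)}, which increase to {xi > c'},
   we get mu (xi <= c') = 1.  Part (ii) intersects the two events. *)

From HB Require Import structures.
From mathcomp Require Import all_boot all_order all_algebra.
From mathcomp Require Import all_classical all_reals all_analysis.
Import Order.TTheory GRing.Theory Num.Theory.
Import numFieldNormedType.Exports.
Local Open Scope classical_set_scope.
Local Open Scope ring_scope.

Section step_integral.
Context {R : realType}.

Lemma integral_itvcy_indic_itvNyc (c : R) :
  (\int[lebesgue_measure]_(t in `[0%R, +oo[) (\1_`]-oo, c] t)%:E = (Num.max c 0)%:E)%E.
Proof.
rewrite integral_indic// -set_itvI.
apply: eq_trans (lebesgue_measure_itv _) _ => /=.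
rewrite lte_fin oppr0 adde0.
by case: ler0P.
Qed.

Lemma integral_itvNyo_indic_itvoy (c : R) :
  (\int[lebesgue_measure]_(t in `]-oo, 0%R[) (\1_`]c, +oo[ t)%:E = (- Num.min c 0)%:E)%E.
Proof.
rewrite integral_indic// -set_itvI.
apply: eq_trans (lebesgue_measure_itv _) _ => /=.
rewrite lte_fin add0e.
by case: ltrP; rewrite ?oppr0.
Qed.

Lemma indic_itvNyc_sub1 (c t : R) : \1_`]-oo, c] t - 1 = - \1_`]c, +oo[ t :> R.
Proof.
rewrite !indicE !mem_setE !in_itv /= andbT ltNge.
by case: (t <= c); rewrite /= ?subrr ?sub0r ?oppr0.
Qed.

Lemma choquet_integral_indic (m : R -> R) (c : R) :
  (forall t, m t = \1_`]-oo, c] t) ->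
  (\int[lebesgue_measure]_(t in `[0%R, +oo[) (m t)%:E
   + \int[lebesgue_measure]_(t in `]-oo, 0%R[) (m t - 1)%:E)%E = c%:E.
Proof.
move=> m_indic; under eq_integral => t _ do rewrite m_indic.
under [X in (_ + X)%E]eq_integral => t _ do rewrite m_indic indic_itvNyc_sub1 EFinN.
rewrite integralN; last first.
  rewrite [X in (_ +? - X)%E]integral0_eq ?oppe0; first by case: (\int[_]_(_ in _) _)%E.
  by move=> t _; rewrite (@ge0_funenegE _ _ setT) ?inE.
rewrite integral_itvcy_indic_itvNyc integral_itvNyo_indic_itvoy -EFinN opprK -EFinD.
by rewrite addr_max_min addr0.
Qed.

End step_integral.

Section zero_one_monotone.
Context {R : realType}.

Lemma cvg_cst_eq {u : R^nat} {a b : R} : (forall n, u n = a) -> u @ \oo --> b -> a = b.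
Proof. by move=> /funext-> a_b; apply: cvg_unique (cvg_cst a) a_b. Qed.

Lemma two_valued_cvg_attained {u : R^nat} {a b : R} :
  (forall n, u n = a \/ u n = b) -> a != b -> u @ \oo --> a -> exists n, u n = a.
Proof.
move=> uab + u_a; apply: contra_neqP => no_a; apply/esym; apply: cvg_cst_eq u_a => n.
by case: (uab n) => // una; exfalso; apply: no_a; exists n.
Qed.

Lemma zero_one_nonincreasing_indic (f : R -> R) :
  (forall t, f t = 0 \/ f t = 1) -> {homo f : s t /~ s <= t} ->
  (exists t, f t = 1) -> (exists t, f t = 0) ->
  (forall t, (fun n => f (t - n.+1%:R^-1)) @ \oo --> f t) ->
  exists c, forall t, f t = \1_`]-oo, c] t.
Proof.
move=> f01 f_noninc [t1 ft1] [t0 ft0] f_leftcont.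
pose S := [set t | f t = 1].
have S_ub : ubound S t0.
  move=> t St; rewrite leNgt; apply/negP => t0t.
  by have := f_noninc _ _ (ltW t0t); rewrite St ft0 ler10.
have S_sup : has_sup S by split; [exists t1 | exists t0].
have f_lt_sup t : t < sup S -> f t = 1.
  move=> /(sup_gt (ex_intro _ t1 ft1)) [s Ss ts].
  have := f_noninc _ _ (ltW ts); rewrite Ss.
  by case: (f01 t) => ->; rewrite ?ler10.
exists (sup S) => t; rewrite indicE mem_setE in_itv /=.
have [t_gt|] := ltP (sup S) t.
  by case: (f01 t) => // /(sup_upper_bound S_sup) /=; rewrite leNgt t_gt.
rewrite le_eqVlt => /predU1P[->|]; last exact: f_lt_sup.
apply/esym; apply: cvg_cst_eq (f_leftcont _) => n; apply: f_lt_sup.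
by rewrite ltrBlDr ltrDl invr_gt0 ltr0Sn.
Qed.

End zero_one_monotone.

Section complement_monotone.
Context {T : Type}.

Lemma nondecreasing_seqC (A : (set T)^nat) :
  nondecreasing_seq A -> nonincreasing_seq (fun n => ~` A n).
Proof.
by move=> A_nd n m nm; rewrite subsetEset; apply: subsetC; rewrite -subsetEset; apply: A_nd.
Qed.

Lemma nonincreasing_seqC (A : (set T)^nat) :
  nonincreasing_seq A -> nondecreasing_seq (fun n => ~` A n).
Proof.
by move=> A_ni n m nm; rewrite subsetEset; apply: subsetC; rewrite -subsetEset; apply: A_ni.
Qed.

End complement_monotone.

Lemma continuous_capacity_conj {d : measure_display} {T : measurableType d} {R : realType}
    {mu : set T -> R} :
  continuous_capacity mu -> continuous_capacity (conj_cap mu).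
Proof.
move=> [[mu0 muT mu01 mu_mono] [mu_up mu_down]].
split; [split|split].
- by rewrite /conj_cap setC0 muT subrr.
- by rewrite /conj_cap setCT mu0 subr0.
- move=> A mA; have /andP[ge0 le1] := mu01 _ (measurableC mA).
  by rewrite /conj_cap subr_ge0 le1 gerBl ge0.
- move=> A B mA mB AB; rewrite /conj_cap lerD2l lerN2.
  by apply: mu_mono; [exact: measurableC | exact: measurableC | exact: subsetC].
- move=> A mA A_nd; rewrite /conj_cap setC_bigcup; apply: cvgB; first exact: cvg_cst.
  by apply: mu_down => [n|]; [exact: measurableC | exact: nondecreasing_seqC].
- move=> A mA A_ni; rewrite /conj_cap setC_bigcap; apply: cvgB; first exact: cvg_cst.
  by apply: mu_up => [n|]; [exact: measurableC | exact: nonincreasing_seqC].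
Qed.

Lemma exists_nat_bracket {R : archiRealDomainType} (x : R) :
  exists n : nat, - n%:R < x < n%:R.
Proof. by exists (Num.bound `|x|); rewrite -ltr_norml archi_boundP. Qed.

Lemma lef_invS {R : numFieldType} (m n : nat) :
  (m <= n)%N -> n.+1%:R^-1 <= m.+1%:R^-1 :> R.
Proof. by move=> mn; rewrite lef_pV2 ?posrE ?ltr0Sn // ler_nat. Qed.

Section level_sets.
Context {d : measure_display} {T : measurableType d} {R : realType}.
Variable xi : T -> R.
Hypothesis xi_ge_measurable : forall t, measurable [set w | t <= xi w].

Let level t := [set w | t <= xi w].

Let level_nondecreasing (g : R^nat) :
  nonincreasing_seq g -> nondecreasing_seq (fun n => level (g n)).
Proof. by move=> g_ni n m nm; rewrite subsetEset => w; apply: le_trans (g_ni _ _ nm). Qed.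

Let level_nonincreasing (g : R^nat) :
  nondecreasing_seq g -> nonincreasing_seq (fun n => level (g n)).
Proof. by move=> g_nd n m nm; rewrite subsetEset => w; apply: le_trans (g_nd _ _ nm). Qed.

Lemma capacity_level_indic {nu : set T -> R} :
  continuous_capacity nu ->
  (forall t, nu [set w | t <= xi w] = 0 \/ nu [set w | t <= xi w] = 1) ->
  exists c, forall t, nu [set w | t <= xi w] = \1_`]-oo, c] t.
Proof.
move=> [[nu0 nuT _ nu_mono] [nu_up nu_down]] nu01.
have levelNn_setT : \bigcup_n level (- n%:R) = setT.
  rewrite -subTset => w _; have [n /andP[n_lt _]] := exists_nat_bracket (xi w).
  by exists n => //; apply: ltW.
have leveln_set0 : \bigcap_n level n%:R = set0.
  rewrite -subset0 => w w_level; have [n /andP[_ n_gt]] := exists_nat_bracket (xi w).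
  by have := w_level n I; rewrite /level /= leNgt n_gt.
have level_left t : \bigcap_n level (t - n.+1%:R^-1) = level t.
  apply/seteqP; split => w /= w_level; last first.
    by move=> n _; rewrite /level /= (le_trans _ w_level) // gerBl invr_ge0.
  rewrite /level /= leNgt; apply/negP => /ltr_add_invr[n].
  by have := w_level n I; rewrite /level /= lerBlDr leNgt => /negP.
apply: zero_one_nonincreasing_indic => //.
- by move=> s t st; apply: nu_mono => // w; apply: le_trans.
- have [n n_1] : exists n, nu (level (- n%:R)) = 1.
    apply: (two_valued_cvg_attained _ (oner_neq0 R)) => [n|]; first exact/or_comm/nu01.
    rewrite -[X in _ --> X]nuT -levelNn_setT.
    apply: nu_up (fun n => xi_ge_measurable _) _.
    by apply: (level_nondecreasing (fun n => - n%:R)) => m n mn; rewrite lerN2 ler_nat.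
  by exists (- n%:R).
- have [n n_0] : exists n, nu (level n%:R) = 0.
    have zero_neq1 : (0 : R) != 1 by rewrite eq_sym oner_neq0.
    apply: (two_valued_cvg_attained _ zero_neq1) => [n|]; first exact: nu01.
    rewrite -[X in _ --> X]nu0 -leveln_set0.
    apply: nu_down (fun n => xi_ge_measurable _) _.
    by apply: (level_nonincreasing (fun n => n%:R)) => m n mn; rewrite ler_nat.
  by exists n%:R.
- move=> t; rewrite -[X in _ --> X]/(nu (level t)) -level_left.
  apply: nu_down (fun n => xi_ge_measurable _) _.
  apply: (level_nonincreasing (fun n => t - n.+1%:R^-1)) => m n mn.
  by rewrite lerD2l lerN2 lef_invS.
Qed.

Lemma choquet_zero_one_level {nu : set T -> R} :
  continuous_capacity nu ->
  (forall t, nu [set w | t <= xi w] = 0 \/ nu [set w | t <= xi w] = 1) ->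
  exists2 c, choquet nu xi = c%:E & forall t, nu [set w | t <= xi w] = \1_`]-oo, c] t.
Proof.
move=> nu_cont nu01; have [c nu_level] := capacity_level_indic nu_cont nu01.
by exists c => //; apply: choquet_integral_indic.
Qed.

Lemma conj_cap_level_indic_le {mu : set T -> R} {c : R} :
  continuous_capacity mu ->
  (forall t, conj_cap mu [set w | t <= xi w] = \1_`]-oo, c] t) ->
  mu [set w | xi w <= c] = 1.
Proof.
move=> mu_cont conj_level; have [_ [conj_up _]] := continuous_capacity_conj mu_cont.
have level_right : \bigcup_n level (c + n.+1%:R^-1) = [set w | c < xi w].
  apply/seteqP; split => [w [n _]|w /ltr_add_invr[n n_lt]].
    by apply: lt_le_trans; rewrite ltrDl invr_gt0 ltr0Sn.
  by exists n => //; apply: ltW.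
have : conj_cap mu [set w | c < xi w] = 0.
  rewrite -level_right; apply/esym.
  apply: (cvg_cst_eq _ (conj_up _ (fun n => xi_ge_measurable _) _)).
    move=> n; rewrite conj_level indicE mem_setE in_itv /=.
    by rewrite leNgt ltrDl invr_gt0 ltr0Sn.
  apply: (level_nondecreasing (fun n => c + n.+1%:R^-1)) => m n mn.
  by rewrite lerD2l lef_invS.
rewrite /conj_cap -preimage_itvoy preimage_setC setCitvr preimage_itvNyc.
by move/eqP; rewrite subr_eq0 => /eqP <-.
Qed.

Lemma choquet_ae_bounds (mu : set T -> R) :
  continuous_capacity mu ->
  (forall t, mu [set w | t <= xi w] = 0 \/ mu [set w | t <= xi w] = 1) ->
  (forall t, mu [set w | xi w < t] = 0 \/ mu [set w | xi w < t] = 1) ->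
  (exists2 c, choquet mu xi = c%:E & mu [set w | c <= xi w] = 1) /\
  (exists2 c, choquet (conj_cap mu) xi = c%:E & mu [set w | xi w <= c] = 1).
Proof.
move=> mu_cont mu01_ge mu01_lt; split.
  have [c choquet_c mu_level] := choquet_zero_one_level mu_cont mu01_ge.
  by exists c => //; rewrite mu_level indicE mem_setE in_itv /= lexx.
have conj_level t : conj_cap mu [set w | t <= xi w] = 1 - mu [set w | xi w < t].
  by rewrite /conj_cap -preimage_itvcy preimage_setC setCitvr preimage_itvNyo.
have [t|c choquet_c conj_c] := choquet_zero_one_level (continuous_capacity_conj mu_cont).
  by rewrite conj_level; case: (mu01_lt t) => ->; rewrite ?subr0 ?subrr; [right | left].
by exists c => //; apply: conj_cap_level_indic_le mu_cont conj_c.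
Qed.

End level_sets.

Theorem theorem2 (d : measure_display) (T : measurableType d) (R : realType)
  (mu : set T -> R) (F0 : set (set T)) :
  continuous_capacity mu ->
  sigma_algebra setT F0 ->
  F0 `<=` measurable ->
  (forall A, F0 A -> mu A = 0 \/ mu A = 1) ->
  (forall xi : T -> R,
     (forall B : set R, measurable B -> F0 (xi @^-1` B)) ->
     mu [set w | (choquet mu xi <= (xi w)%:E)%E] = 1 /\
     mu [set w | ((xi w)%:E <= choquet (conj_cap mu) xi)%E] = 1) /\
  ((forall A B, F0 A -> F0 B -> mu A = 1 -> mu B = 1 -> mu (A `&` B) = 1) ->
   forall xi : T -> R,
     (forall B : set R, measurable B -> F0 (xi @^-1` B)) ->
     mu [set w | (choquet mu xi <= (xi w)%:E)%E /\
                 ((xi w)%:E <= choquet (conj_cap mu) xi)%E] = 1).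
Proof.
move=> mu_cont _ F0_meas F0_01.
have F0_itv xi (i : interval R) : (forall B, measurable B -> F0 (xi @^-1` B)) ->
    F0 (xi @^-1` [set` i]).
  by move=> xi_F0; apply: xi_F0; apply: measurable_itv.
have ae_bounds xi : (forall B, measurable B -> F0 (xi @^-1` B)) ->
    (exists2 c, choquet mu xi = c%:E & mu [set w | c <= xi w] = 1) /\
    (exists2 c, choquet (conj_cap mu) xi = c%:E & mu [set w | xi w <= c] = 1).
  move=> xi_F0; apply: choquet_ae_bounds => // t.
  - by apply: F0_meas; rewrite -preimage_itvcy; apply: F0_itv.
  - by apply: F0_01; rewrite -preimage_itvcy; apply: F0_itv.
  - by apply: F0_01; rewrite -preimage_itvNyo; apply: F0_itv.
split=> [xi xi_F0 | F0_setI xi xi_F0];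
  have [[c1 -> mu_ge] [c2 -> mu_le]] := ae_bounds xi xi_F0.
  by split; under eq_set do rewrite lee_fin.
under eq_set do rewrite !lee_fin.
apply: (F0_setI [set w | c1 <= xi w] [set w | xi w <= c2]) => //.
  by rewrite -preimage_itvcy; apply: F0_itv.
by rewrite -preimage_itvNyc; apply: F0_itv.
Qed.
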